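(* The relation $\ll_C$ on $\bar M$, defined by $\bar P \ll_C \bar Q$ if and only if $P^*\cap Q\neq\emptyset$, is a chronology on $\bar M$: it is transitive (if $\bar P\ll_C\bar Q$ and $\bar Q\ll_C\bar R$ then $\bar P\ll_C\bar R$) and irreflexive (there is no $\bar P\in\bar M$ with $\bar P\ll_C\bar P$).
   Context: Let $M$ be a strongly causal spacetime, i.e. a time-oriented Lorentzian manifold in which every point has a neighbourhood that no non-spacelike curve enters more than once. For $p,q\in M$ write $p\ll q$ if there is a future-directed timelike curve from $p$ to $q$. Set $I^+(p)=\{q:p\ll q\}$ and $I^-(p)=\{q:q\ll p\}$, and for $S\subset M$ set $I^\pm(S)=\bigcup_{s\in S}I^\pm(s)$. For a curve $\gamma$ (viewed as a point set) put $I^\pm[\gamma]=I^\pm(\gamma)$. A past-set is a set of the form $I^-(S)$ with $S\subset M$. An IP (indecomposable past-set) is a nonempty past-set that is not the union of two proper subsets which are themselves past-sets. Future-sets and IFs are defined dually. $\hat M$ is the set of IPs and $\check M$ the set of IFs. The IPs are exactly the sets $I^-[\gamma]$ for future-directed timelike curves $\gamma$, and dually for IFs. For an IP $P$, its common future is $f(P)=I^+(\{x\in M:P\subset I^-(x)\})$. For an IF $P^*$, its common past is $p(P^* )=I^-(\{x\in M:P^*\subset I^+(x)\})$. $R_{pf}\subset\hat M\times\check M$ is the set of pairs $(P,Q^* )$ satisfying both of the following: - $Q^*\subset f(P)$, and there is no IF $R^*\neq Q^*$ with $Q^*\subset R^*\subset f(P)$; - $P\subset p(Q^* )$, and there is no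 IP $R\neq P$ with $P\subset R\subset p(Q^* )$. The causal completion $\bar M$ is the set of pairs $\bar P=(P,P^* )$ such that one of the following holds: - (i) $(P,P^* )\in R_{pf}$; - (ii) $P=\emptyset$ and $P^*$ is an IF appearing in no pair of $R_{pf}$; - (iii) $P^*=\emptyset$ and $P$ is an IP appearing in no pair of $R_{pf}$. Elements of $\bar M$ are written $\bar P=(P,P^* )$, $\bar Q=(Q,Q^* )$, $\bar R=(R,R^* )$, and so on. *)

Set Implicit Arguments.
(* Lorentzian manifolds are not available; the causal
   completion only depends on the chronological relation << of M, so M is
   modelled as an abstract chronological set. *)

Section Chron.
Variable M : Type.
Variable chr : M -> M -> Prop.

Definition mset := M -> Prop.
Definition msubset (A B : mset) : Prop := forall x, A x -> B x.
Definition munion (A B : mset) : mset := fun x => A x \/ B x.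
Definition mempty : mset := fun _ => False.

Definition Iplus (p : M) : mset := fun q => chr p q.
Definition Iminus (p : M) : mset := fun q => chr q p.
Definition IplusS (S : mset) : mset := fun q => exists s, S s /\ chr s q.
Definition IminusS (S : mset) : mset := fun q => exists s, S s /\ chr q s.

Definition is_past_set (P : mset) : Prop := exists S, P = IminusS S.
Definition is_future_set (P : mset) : Prop := exists S, P = IplusS S.

Definition is_IP (P : mset) : Prop :=
  is_past_set P /\ (exists x, P x) /\
  ~ (exists A B, is_past_set A /\ is_past_set B /\
       msubset A P /\ msubset B P /\ A <> P /\ B <> P /\ P = munion A B).
Definition is_IF (P : mset) : Prop :=
  is_future_set P /\ (exists x, P x) /\
  ~ (exists A B, is_future_set A /\ is_future_set B /\
       msubset A P /\ msubset B P /\ A <> P /\ B <> P /\ P = munion A B).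

Definition cfut (P : mset) : mset := IplusS (fun x => msubset P (Iminus x)).
Definition cpast (P : mset) : mset := IminusS (fun x => msubset P (Iplus x)).

Definition Rpf (P Q : mset) : Prop :=
  is_IP P /\ is_IF Q /\
  (msubset Q (cfut P) /\
     forall R, is_IF R -> R <> Q -> ~ (msubset Q R /\ msubset R (cfut P))) /\
  (msubset P (cpast Q) /\
     forall R, is_IP R -> R <> P -> ~ (msubset P R /\ msubset R (cpast Q))).

Definition in_Mbar (Pb : mset * mset) : Prop :=
  let (P, Ps) := Pb in
  Rpf P Ps \/
  (P = mempty /\ is_IF Ps /\ forall X, ~ Rpf X Ps) \/
  (Ps = mempty /\ is_IP P /\ forall X, ~ Rpf P X).

Definition chronC (Pb Qb : mset * mset) : Prop :=
  exists x, snd Pb x /\ fst Qb x.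

End Chron.

(* Properties of the chronological relation of a strongly causal spacetime
   used here as the abstract hypotheses on (M, <<). *)
Definition chron_axioms (M : Type) (chr : M -> M -> Prop) : Prop :=
  (forall x y z, chr x y -> chr y z -> chr x z) /\
  (forall x, ~ chr x x) /\
  (forall x y, chr x y -> exists z, chr x z /\ chr z y) /\
  (forall x, exists y, chr x y) /\ (forall x, exists y, chr y x) /\
  (forall x y, (forall z, chr z x <-> chr z y) -> x = y) /\
  (forall x y, (forall z, chr x z <-> chr y z) -> x = y).


(* If [x] lies in [P^* ∩ Q] and [y] in [Q^* ∩ R], then [Q] and [Q^*] are both
   nonempty, so [(Q, Q^* )] is in [R_pf] and [Q^*] lies in the common future of
   [Q]; hence [x << y], and [x] lies in the past-set [R].  Likewise a point of
   [P^* ∩ P] would satisfy [x << x]. *)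

Section CausalCompletion.
Context {M : Type} {chr : M -> M -> Prop}.
Hypothesis chr_trans : forall x y z, chr x y -> chr y z -> chr x z.

Lemma in_Mbar_Rpf {P Ps : mset M} {x y : M} :
  in_Mbar chr (P, Ps) -> P x -> Ps y -> Rpf chr P Ps.
Proof.
  intros [HR | [[HP _] | [HPs _]]] Hx Hy.
  - exact HR.
  - subst P; destruct Hx.
  - subst Ps; destruct Hy.
Qed.

Lemma in_Mbar_IP {P Ps : mset M} {x : M} :
  in_Mbar chr (P, Ps) -> P x -> is_IP chr P.
Proof.
  intros [[HP _] | [[HP _] | [_ [HP _]]]] Hx.
  - exact HP.
  - subst P; destruct Hx.
  - exact HP.
Qed.

Lemma past_set_chr_closed {P : mset M} {x y : M} :
  is_past_set chr P -> chr x y -> P y -> P x.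
Proof.
  intros [S ->] Hxy [s [Hs Hys]].
  exists s; split; [exact Hs | exact (chr_trans _ _ _ Hxy Hys)].
Qed.

Lemma cfut_chr {P : mset M} {x y : M} : P x -> cfut chr P y -> chr x y.
Proof.
  intros Hx [z [Hz Hzy]].
  exact (chr_trans _ _ _ (Hz x Hx) Hzy).
Qed.

Lemma Rpf_chr {P Ps : mset M} {x y : M} :
  Rpf chr P Ps -> P x -> Ps y -> chr x y.
Proof.
  intros [_ [_ [[Hsub _] _]]] Hx Hy.
  exact (cfut_chr Hx (Hsub y Hy)).
Qed.

End CausalCompletion.

Theorem theorem2 (M : Type) (chr : M -> M -> Prop) (Hchr : @chron_axioms M chr) :
  (forall Pb Qb Rb : mset M * mset M,
      in_Mbar chr Pb -> in_Mbar chr Qb -> in_Mbar chr Rb ->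
      chronC Pb Qb -> chronC Qb Rb -> chronC Pb Rb) /\
  (forall Pb : mset M * mset M, in_Mbar chr Pb -> ~ chronC Pb Pb).
Proof.
  destruct Hchr as [Htrans [Hirrefl _]].
  split.
  - intros [P Ps] [Q Qs] [R Rs] _ HQ HR [x [HxPs HxQ]] [y [HyQs HyR]].
    simpl in *.
    assert (Hxy : chr x y)
      by exact (Rpf_chr Htrans (in_Mbar_Rpf HQ HxQ HyQs) HxQ HyQs).
    assert (HRpast : is_past_set chr R) by exact (proj1 (in_Mbar_IP HR HyR)).
    exists x; split; [exact HxPs | exact (past_set_chr_closed Htrans HRpast Hxy HyR)].
  - intros [P Ps] HP [x [HxPs HxP]]; simpl in *.
    apply (Hirrefl x).
    exact (Rpf_chr Htrans (in_Mbar_Rpf HP HxP HxPs) HxP HxPs).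
Qed.
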